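(* Let $d>0$, let $\mathcal{S}$ be the 4-PAM constellation labeled by any Gray labeling, and let $\mathcal{B}$ be any rate-$1/2$ binary convolutional code generated by $\boldsymbol{G}(D)=[g_1(D),\,g_2(D)]$ with $g_1(D),g_2(D)$ nonzero binary polynomials. Then $\mathsf{L}(\mathcal{B})=0$.
   Context: $\mathcal{S}=\{s_1,s_2,s_3,s_4\}$ with $s_1=-3d$, $s_2=-d$, $s_3=d$, $s_4=3d$. A labeling is a bijection $\Phi_{\mathcal{S}}:\{0,1\}^2\to\mathcal{S}$, described by $\boldsymbol{q}=[q_1,\dots,q_4]$ where $q_i$ is the integer whose two-bit representation (most significant bit first) is $\Phi_{\mathcal{S}}^{-1}(s_i)$; the Gray labelings are $[0,1,3,2]$, $[0,2,3,1]$, $[1,0,2,3]$, $[2,0,1,3]$. The convolutional code $\mathcal{B}$ consists of the sequences $\boldsymbol{b}=(\boldsymbol{b}[k])_k$, $\boldsymbol{b}[k]=[b_1[k],b_2[k]]$, whose odd bits $b_1(D)=u(D)g_1(D)$ and even bits $b_2(D)=u(D)g_2(D)$, as $u(D)$ ranges over binary formal Laurent series (the same code is generated by $[1,\,g_2(D)/g_1(D)]$ and by $[g_1(D)/g_2(D),\,1]$). The CM code is $\mathcal{X}=\{(\Phi_{\mathcal{S}}(\boldsymbol{b}[k]))_k:\boldsymbol{b}\in\mathcal{B}\}$. For symbol sequences $\boldsymbol{x},\hat{\boldsymbol{x}}$ and each position $k$ with $x[k]\neq\hat{x}[k]$: $\mu^{\mathcal{X}}_k=\sigma^{2,\mathcal{X}}_k=(x[k]-\hat{x}[k])^2/(4d^2)$;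 $\mu^{\mathcal{B}}_k=\sigma^{2,\mathcal{B}}_k=(x[k]-\hat{x}[k])^2/(4d^2)$ except that if $\{x[k],\hat{x}[k]\}=\{s_1,s_4\}$ then $\mu^{\mathcal{B}}_k=3$, $\sigma^{2,\mathcal{B}}_k=1$. Summing over $k$ with $x[k]\neq\hat{x}[k]$, $a^{\mathcal{X}}(\boldsymbol{x},\hat{\boldsymbol{x}})=\sum_k\mu^{\mathcal{X}}_k/\sqrt{\sum_k\sigma^{2,\mathcal{X}}_k}$ and $a^{\mathcal{B}}(\boldsymbol{x},\hat{\boldsymbol{x}})=\sum_k\mu^{\mathcal{B}}_k/\sqrt{\sum_k\sigma^{2,\mathcal{B}}_k}$ (taken to be $+\infty$ if the sequences differ in infinitely many positions). The asymptotic loss of the code is $\mathsf{L}(\mathcal{B})=20\log_{10}\Big(\min_{\boldsymbol{x}\neq\hat{\boldsymbol{x}}\in\mathcal{X}}a^{\mathcal{X}}(\boldsymbol{x},\hat{\boldsymbol{x}})\big/\min_{\boldsymbol{x}\neq\hat{\boldsymbol{x}}\in\mathcal{X}}a^{\mathcal{B}}(\boldsymbol{x},\hat{\boldsymbol{x}})\Big)$ dB. *)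

From Stdlib Require Import Reals ZArith List.
Import ListNotations.
Open Scope R_scope.

(* 4-PAM symbols s_1..s_4 = -3d,-d,d,3d, indexed 0..3: sym d i = (2i-3)d *)
Definition sym (d : R) (i : nat) : R := (2 * INR i - 3) * d.

(* Labelings q = [q_1;...;q_4]; the four Gray labelings *)
Definition GrayLabelings : list (list nat) :=
  [[0;1;3;2]; [0;2;3;1]; [1;0;2;3]; [2;0;1;3]]%nat.

Fixpoint idx (v : nat) (q : list nat) : nat :=
  match q with
  | [] => 0%nat
  | a :: q' => if Nat.eqb a v then 0%nat else S (idx v q')
  end.

(* Phi_S([b1,b2]) = s_i where q_i is the integer with bits b1 (MSB) b2 *)
Definition Phi (q : list nat) (d : R) (b1 b2 : bool) : R :=
  sym d (idx (2 * Nat.b2n b1 + Nat.b2n b2)%nat q).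

Definition laurent (u : Z -> bool) : Prop :=
  exists N : Z, forall k : Z, (k < N)%Z -> u k = false.

(* binary polynomial g = [g_0; g_1; ...] (coefficient of D^i at position i);
   (g(D) u(D))_k = XOR_i g_i u_{k-i} *)
Fixpoint conv (g : list bool) (u : Z -> bool) (k : Z) : bool :=
  match g with
  | [] => false
  | c :: g' => xorb (c && u k) (conv g' u (k - 1)%Z)
  end.

Definition poly_nonzero (g : list bool) : Prop := In true g.

Definition CMcode (q : list nat) (d : R) (g1 g2 : list bool) (x : Z -> R) : Prop :=
  exists u : Z -> bool, laurent u /\
    forall k : Z, x k = Phi q d (conv g1 u k) (conv g2 u k).

Definition muX (d : R) (x xh : Z -> R) (k : Z) : R :=
  (x k - xh k) ^ 2 / (4 * d ^ 2).
Definition sigX (d : R) (x xh : Z -> R) (k : Z) : R := muX d x xh k.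

Definition is_s1s4 (d : R) (a b : R) : bool :=
  if Req_EM_T a (sym d 0) then (if Req_EM_T b (sym d 3) then true else false)
  else if Req_EM_T a (sym d 3) then (if Req_EM_T b (sym d 0) then true else false)
  else false.

Definition muB (d : R) (x xh : Z -> R) (k : Z) : R :=
  if is_s1s4 d (x k) (xh k) then 3 else (x k - xh k) ^ 2 / (4 * d ^ 2).
Definition sigB (d : R) (x xh : Z -> R) (k : Z) : R :=
  if is_s1s4 d (x k) (xh k) then 1 else (x k - xh k) ^ 2 / (4 * d ^ 2).

(* sum of f k over k = -K..K *)
Definition sumZ (K : nat) (f : Z -> R) : R :=
  fold_right Rplus 0
    (map (fun n : nat => f (Z.of_nat n - Z.of_nat K)%Z) (seq 0 (2 * K + 1))).

Definition diff_within (x xh : Z -> R) (K : nat) : Prop :=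
  forall k : Z, (Z.of_nat K < Z.abs k)%Z -> x k = xh k.

(* a^X and a^B computed on a window [-K,K] containing all differing positions
   (the value does not depend on such K) *)
Definition aX (d : R) (x xh : Z -> R) (K : nat) : R :=
  sumZ K (muX d x xh) / sqrt (sumZ K (sigX d x xh)).
Definition aB (d : R) (x xh : Z -> R) (K : nat) : R :=
  sumZ K (muB d x xh) / sqrt (sumZ K (sigB d x xh)).

(* m is the minimum of A over pairs x <> xh in the code C.  Pairs differing in
   infinitely many positions have value +oo and so never undercut m. *)
Definition IsMin (A : (Z -> R) -> (Z -> R) -> nat -> R)
                 (C : (Z -> R) -> Prop) (m : R) : Prop :=
  (exists x xh K, C x /\ C xh /\ x <> xh /\ diff_within x xh K /\ A x xh K = m) /\
  (forall x xh K, C x -> C xh -> x <> xh -> diff_within x xh K -> m <= A x xh K).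

Definition log10 (x : R) : R := ln x / ln 10.

Definition Loss (mX mB : R) : R := 20 * log10 (mX / mB).

(* Write w for the per-position quantity sigB.  Pointwise muX >= w and muB >= w,
   so a^X = sqrt (sum muX) and a^B >= (sum w) / sqrt (sum w) are both at least
   sqrt (sum w), with equality for both as soon as no position pairs s1 with s4.
   For a Gray labeling w is the squared Hamming distance of the two labels, so
   adding a common information sequence to both codewords (linearity of the code)
   keeps every w.  Since a nonzero generator polynomial can produce any output
   pattern on a finite window, that common sequence can set, along the window,
   the label bit in which s1 and s4 agree to the other value in the first
   codeword, which rules out the pair {s1, s4}.  Hence both minima equal the
   square root of the least attainable sum of w, and the loss is 0. *)

From Stdlib Require Import Reals ZArith List Lia Lra Classical FunctionalExtensionality Wf_nat.

Open Scope R_scope.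

Lemma sym_inj d i j : d <> 0 -> sym d i = sym d j -> i = j.
Proof.
  intros Hd E. unfold sym in E. apply Rmult_eq_reg_r in E; [|exact Hd].
  apply INR_eq. lra.
Qed.

Lemma Req_EM_T_sym {A : Type} d i j (a b : A) : d <> 0 ->
  (if Req_EM_T (sym d i) (sym d j) then a else b) = if Nat.eqb i j then a else b.
Proof.
  intros Hd. destruct (Req_EM_T _ _) as [E|E], (Nat.eqb_spec i j) as [->|N]; auto.
  - now apply sym_inj in E.
  - now contradiction E.
Qed.

Lemma is_s1s4_sym d i j : d <> 0 ->
  is_s1s4 d (sym d i) (sym d j) =
  (Nat.eqb i 0 && Nat.eqb j 3 || Nat.eqb i 3 && Nat.eqb j 0)%bool.
Proof.
  intros Hd. unfold is_s1s4. rewrite !Req_EM_T_sym by exact Hd.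
  destruct (Nat.eqb_spec i 0), (Nat.eqb_spec i 3), (Nat.eqb_spec j 0), (Nat.eqb_spec j 3);
    subst; reflexivity || lia.
Qed.

Lemma is_s1s4_true d a b : is_s1s4 d a b = true ->
  (a = sym d 0 /\ b = sym d 3) \/ (a = sym d 3 /\ b = sym d 0).
Proof. unfold is_s1s4. repeat destruct Req_EM_T; auto; discriminate. Qed.

Lemma sym_sqdist d i j : d <> 0 -> (sym d i - sym d j) ^ 2 / (4 * d ^ 2) = (INR i - INR j) ^ 2.
Proof. intros Hd. unfold sym. field. exact Hd. Qed.

Section Metrics.

Variables (d : R) (x xh : Z -> R).
Hypothesis Hd : d <> 0.

Lemma sqdist_nonneg k : 0 <= (x k - xh k) ^ 2 / (4 * d ^ 2).
Proof.
  apply Rmult_le_pos; [apply pow2_ge_0|].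
  apply Rlt_le, Rinv_0_lt_compat. assert (0 < d ^ 2) by (rewrite <- Rsqr_pow2; apply Rsqr_pos_lt, Hd). lra.
Qed.

Lemma sigB_nonneg k : 0 <= sigB d x xh k.
Proof. unfold sigB. destruct is_s1s4; [lra | apply sqdist_nonneg]. Qed.

Lemma sigB_le_muB k : sigB d x xh k <= muB d x xh k.
Proof. unfold sigB, muB. destruct is_s1s4; lra. Qed.

Lemma sigB_le_muX k : sigB d x xh k <= muX d x xh k.
Proof.
  unfold sigB, muX. destruct is_s1s4 eqn:E; [|lra].
  destruct (is_s1s4_true _ _ _ E) as [[-> ->]|[-> ->]];
    rewrite sym_sqdist by exact Hd; simpl; lra.
Qed.

Lemma sigB_eq0 k : sigB d x xh k = 0 <-> x k = xh k.
Proof.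
  unfold sigB. destruct is_s1s4 eqn:E.
  - split; [lra|]. intros Exk. destruct (is_s1s4_true _ _ _ E) as [[E1 E2]|[E1 E2]];
      rewrite Exk, E2 in E1; apply sym_inj in E1; easy.
  - split; intros H.
    + assert (E2 : (x k - xh k) ^ 2 = 0).
      { replace ((x k - xh k) ^ 2) with ((x k - xh k) ^ 2 / (4 * d ^ 2) * (4 * d ^ 2))
          by (field; exact Hd).
        rewrite H. ring. }
      nra.
    + rewrite H, Rminus_diag. unfold Rdiv. ring.
Qed.

Lemma muX_not_s1s4 k : is_s1s4 d (x k) (xh k) = false -> muX d x xh k = sigB d x xh k.
Proof. unfold muX, sigB. now intros ->. Qed.

Lemma muB_not_s1s4 k : is_s1s4 d (x k) (xh k) = false -> muB d x xh k = sigB d x xh k.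
Proof. unfold muB, sigB. now intros ->. Qed.

End Metrics.

Lemma fold_Rplus_nonneg (l : list R) :
  (forall a, In a l -> 0 <= a) -> 0 <= fold_right Rplus 0 l.
Proof.
  induction l as [|b l IH]; simpl; intros H; [lra|].
  pose proof (H b (or_introl eq_refl)). specialize (IH (fun a Ha => H a (or_intror Ha))). lra.
Qed.

Lemma fold_Rplus_ge_In (l : list R) a :
  (forall b, In b l -> 0 <= b) -> In a l -> a <= fold_right Rplus 0 l.
Proof.
  induction l as [|b l IH]; simpl; intros H Ha; [easy|].
  assert (Hl : forall c, In c l -> 0 <= c) by auto.
  destruct Ha as [<-|Ha].
  - pose proof (fold_Rplus_nonneg l Hl). lra.
  - specialize (IH Hl Ha). specialize (H b (or_introl eq_refl)). lra.
Qed.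

Lemma in_window K n : In n (seq 0 (2 * K + 1)) -> (Z.abs (Z.of_nat n - Z.of_nat K) <= Z.of_nat K)%Z.
Proof. rewrite in_seq. lia. Qed.

Lemma sumZ_ext_window K f g :
  (forall k, (Z.abs k <= Z.of_nat K)%Z -> f k = g k) -> sumZ K f = sumZ K g.
Proof. intros H. unfold sumZ. f_equal. apply map_ext_in. intros n Hn. apply H, in_window, Hn. Qed.

Lemma sumZ_le K f g : (forall k, f k <= g k) -> sumZ K f <= sumZ K g.
Proof.
  intros H. unfold sumZ. induction (seq 0 (2 * K + 1)) as [|n l IH]; simpl; [lra|].
  apply Rplus_le_compat; auto.
Qed.

Lemma sumZ_ge_term K f k :
  (forall k, 0 <= f k) -> (Z.abs k <= Z.of_nat K)%Z -> f k <= sumZ K f.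
Proof.
  intros H Hk. apply fold_Rplus_ge_In.
  - intros b Hb. apply in_map_iff in Hb as [n [<- _]]. apply H.
  - apply in_map_iff. exists (Z.to_nat (k + Z.of_nat K)). split.
    + f_equal. lia.
    + apply in_seq. lia.
Qed.

Lemma sumZ_INR K (f : Z -> nat) : exists n, sumZ K (fun k => INR (f k)) = INR n.
Proof.
  unfold sumZ. induction (seq 0 (2 * K + 1)) as [|a l [n IH]]; simpl.
  - now exists 0%nat.
  - exists (f (Z.of_nat a - Z.of_nat K)%Z + n)%nat. now rewrite plus_INR, IH.
Qed.

Lemma diff_within_witness (x xh : Z -> R) K : x <> xh -> diff_within x xh K ->
  exists k, (Z.abs k <= Z.of_nat K)%Z /\ x k <> xh k.
Proof.
  intros Hne Hd. apply NNPP. intros Hno. apply Hne, functional_extensionality. intros k.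
  destruct (Z_le_gt_dec (Z.abs k) (Z.of_nat K)).
  - apply NNPP. eauto.
  - apply Hd. lia.
Qed.

Lemma div_sqrt_self t : 0 < t -> t / sqrt t = sqrt t.
Proof.
  intros Ht. assert (Hs : 0 < sqrt t) by (apply sqrt_lt_R0, Ht).
  rewrite <- (sqrt_sqrt t) at 1 by lra. field. lra.
Qed.

Section Ratios.

Variables (d : R) (x xh : Z -> R) (K : nat).
Hypotheses (Hd : d <> 0) (Hne : x <> xh) (Hwin : diff_within x xh K).

Lemma sumZ_sigB_pos : 0 < sumZ K (sigB d x xh).
Proof.
  destruct (diff_within_witness x xh K Hne Hwin) as [k [Hk Hxk]].
  assert (Hpos : 0 < sigB d x xh k).
  { destruct (sigB_nonneg d x xh Hd k) as [H|H]; [exact H|].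
    now apply eq_sym, sigB_eq0 in H. }
  pose proof (sumZ_ge_term K (sigB d x xh) k (sigB_nonneg d x xh Hd) Hk). lra.
Qed.

Lemma aX_ge : sqrt (sumZ K (sigB d x xh)) <= aX d x xh K.
Proof.
  pose proof sumZ_sigB_pos as Hpos.
  pose proof (sumZ_le K _ _ (sigB_le_muX d x xh Hd)) as Hle.
  unfold aX. change (sumZ K (sigX d x xh)) with (sumZ K (muX d x xh)).
  rewrite div_sqrt_self by lra. apply sqrt_le_1_alt, Hle.
Qed.

Lemma aB_ge : sqrt (sumZ K (sigB d x xh)) <= aB d x xh K.
Proof.
  pose proof sumZ_sigB_pos as Hpos.
  pose proof (sumZ_le K _ _ (sigB_le_muB d x xh)) as Hle.
  unfold aB. rewrite <- (div_sqrt_self (sumZ K (sigB d x xh))) at 1 by exact Hpos.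
  apply Rmult_le_compat_r; [|exact Hle].
  apply Rlt_le, Rinv_0_lt_compat, sqrt_lt_R0, Hpos.
Qed.

Lemma aX_aB_no_s1s4 :
  (forall k, (Z.abs k <= Z.of_nat K)%Z -> is_s1s4 d (x k) (xh k) = false) ->
  aX d x xh K = sqrt (sumZ K (sigB d x xh)) /\ aB d x xh K = sqrt (sumZ K (sigB d x xh)).
Proof.
  intros H. pose proof sumZ_sigB_pos as Hpos.
  assert (EX : sumZ K (muX d x xh) = sumZ K (sigB d x xh))
    by (apply sumZ_ext_window; intros; apply muX_not_s1s4; auto).
  assert (EB : sumZ K (muB d x xh) = sumZ K (sigB d x xh))
    by (apply sumZ_ext_window; intros; apply muB_not_s1s4; auto).
  unfold aX, aB. change (sumZ K (sigX d x xh)) with (sumZ K (muX d x xh)).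
  rewrite EX, EB, div_sqrt_self by exact Hpos. now split.
Qed.

End Ratios.

Definition xorseq (u v : Z -> bool) : Z -> bool := fun k => xorb (u k) (v k).

Lemma xorseq_cancel_r u v w : xorseq (xorseq u w) (xorseq v w) = xorseq u v.
Proof. apply functional_extensionality. intros k. unfold xorseq. now destruct (u k), (v k), (w k). Qed.

Lemma laurent_xorseq u v : laurent u -> laurent v -> laurent (xorseq u v).
Proof.
  intros [N HN] [M HM]. exists (Z.min N M). intros k Hk.
  unfold xorseq. rewrite HN, HM by lia. reflexivity.
Qed.

Lemma conv_xorseq g u v k : conv g (xorseq u v) k = xorb (conv g u k) (conv g v k).
Proof.
  revert k; induction g as [|c g IH]; intros k; simpl; [reflexivity|].
  rewrite IH. unfold xorseq.
  destruct c, (u k), (v k), (conv g u (k - 1)%Z), (conv g v (k - 1)%Z); reflexivity.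
Qed.

Lemma conv_zero g k : conv g (fun _ => false) k = false.
Proof. revert k; induction g as [|c g IH]; intros k; simpl; [|rewrite IH; destruct c]; reflexivity. Qed.

Definition coef (g : list bool) (i : Z) : bool :=
  if (i <? 0)%Z then false else nth (Z.to_nat i) g false.

Lemma coef_out g i : (Z.of_nat (length g) <= i)%Z \/ (i < 0)%Z -> coef g i = false.
Proof.
  intros H. unfold coef. destruct (Z.ltb_spec i 0); [reflexivity|].
  apply nth_overflow. lia.
Qed.

Lemma conv_impulse g r k : conv g (fun i => Z.eqb i r) k = coef g (k - r).
Proof.
  revert k; induction g as [|c g IH]; intros k; simpl.
  - unfold coef. destruct (_ <? 0)%Z; [|destruct (Z.to_nat _)]; reflexivity.
  - rewrite IH. unfold coef.
    destruct (Z.eqb_spec k r) as [->|Hkr].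
    + replace (r - r)%Z with 0%Z by lia.
      destruct (Z.ltb_spec (r - 1 - r) 0); [|lia]. now destruct c.
    + destruct (Z.ltb_spec (k - r) 0), (Z.ltb_spec (k - 1 - r) 0); try lia.
      * now destruct c.
      * replace (Z.to_nat (k - r)) with (S (Z.to_nat (k - 1 - r))) by lia.
        now destruct c.
Qed.

Lemma first_true g : In true g ->
  exists j, nth j g false = true /\ forall i, (i < j)%nat -> nth i g false = false.
Proof.
  induction g as [|c g IH]; simpl; [tauto|]. intros H.
  destruct c.
  - exists 0%nat. split; [reflexivity | intros; lia].
  - destruct H as [H|H]; [discriminate|].
    destruct (IH H) as [j [Hj Hlt]]. exists (S j). split; [exact Hj|].
    intros [|i] Hi; [reflexivity|]. apply Hlt. lia.
Qed.

(* Flipping u at p - j, j the lowest index of a nonzero coefficient of g,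
   flips g u at p and leaves it unchanged before p. *)
Lemma conv_control g (t : Z -> bool) (A : Z) (n : nat) : poly_nonzero g ->
  exists w, laurent w /\ forall k, (A <= k < A + Z.of_nat n)%Z -> conv g w k = t k.
Proof.
  intros Hg. destruct (first_true g Hg) as [j [Hj Hlt]].
  induction n as [|n [w [Hw Hc]]].
  - exists (fun _ => false). split; [exists 0%Z; auto | intros; lia].
  - set (p := (A + Z.of_nat n)%Z).
    destruct (Bool.bool_dec (conv g w p) (t p)) as [E|E].
    + exists w. split; [exact Hw|]. intros k Hk.
      destruct (Z.eq_dec k p) as [->|]; [exact E | apply Hc; lia].
    + set (flip := fun i => Z.eqb i (p - Z.of_nat j)).
      exists (xorseq w flip). split.
      * apply laurent_xorseq; [exact Hw|]. exists (p - Z.of_nat j)%Z. intros k Hk.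
        apply Z.eqb_neq. lia.
      * intros k Hk. unfold flip. rewrite conv_xorseq, conv_impulse. unfold coef.
        destruct (Z.eq_dec k p) as [->|Hkp].
        -- replace (p - (p - Z.of_nat j))%Z with (Z.of_nat j) by lia.
           destruct (Z.ltb_spec (Z.of_nat j) 0); [lia|].
           rewrite Nat2Z.id, Hj. destruct (conv g w p), (t p); simpl; congruence.
        -- rewrite Hc by lia.
           destruct (Z.ltb_spec (k - (p - Z.of_nat j)) 0); [|rewrite Hlt by lia];
             apply Bool.xorb_false_r.
Qed.

Definition hamming (e1 e2 : bool) : nat := Nat.b2n e1 + Nat.b2n e2.

Section GrayLabeling.

Variables (q : list nat) (d : R).
Hypotheses (Hq : In q GrayLabelings) (Hd : d <> 0).

Lemma sigB_Phi x xh k b1 b2 c1 c2 :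
  x k = Phi q d b1 b2 -> xh k = Phi q d c1 c2 ->
  sigB d x xh k = INR (hamming (xorb b1 c1) (xorb b2 c2)) ^ 2.
Proof.
  intros Hx Hxh. unfold sigB. rewrite Hx, Hxh. unfold Phi.
  rewrite is_s1s4_sym, sym_sqdist by exact Hd.
  destruct Hq as [<-|[<-|[<-|[<-|[]]]]]; destruct b1, b2, c1, c2; simpl; ring.
Qed.

(* The labels of s1 and s4 agree in one bit; giving the first label the
   opposite value v of that bit keeps its symbol out of {s1, s4}. *)
Lemma Phi_avoid_s1s4 : exists s v : bool, forall b1 b2 c1 c2,
  (if s then b1 else b2) = v -> is_s1s4 d (Phi q d b1 b2) (Phi q d c1 c2) = false.
Proof.
  unfold Phi. destruct Hq as [<-|[<-|[<-|[<-|[]]]]];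
    [exists false, true | exists true, true | exists false, false | exists true, false];
    intros b1 b2 c1 c2 Hv; rewrite is_s1s4_sym by exact Hd;
    destruct b1, b2, c1, c2; simpl in Hv; try discriminate; reflexivity.
Qed.

End GrayLabeling.

Section Code.

Variables (q : list nat) (d : R) (g1 g2 : list bool).
Hypotheses (Hq : In q GrayLabelings) (Hd : d <> 0).

Definition cm_seq (u : Z -> bool) : Z -> R := fun k => Phi q d (conv g1 u k) (conv g2 u k).

Definition code_pair (x xh : Z -> R) (K : nat) : Prop :=
  CMcode q d g1 g2 x /\ CMcode q d g1 g2 xh /\ x <> xh /\ diff_within x xh K.

Lemma CMcode_cm_seq x : CMcode q d g1 g2 x -> exists u, laurent u /\ x = cm_seq u.
Proof.
  intros [u [Hu Hx]]. exists u. split; [exact Hu|]. now apply functional_extensionality.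
Qed.

Lemma CMcode_of_laurent u : laurent u -> CMcode q d g1 g2 (cm_seq u).
Proof. intros Hu. now exists u. Qed.

Lemma sigB_cm_seq u uh k :
  sigB d (cm_seq u) (cm_seq uh) k =
  INR (hamming (conv g1 (xorseq u uh) k) (conv g2 (xorseq u uh) k)) ^ 2.
Proof. rewrite !conv_xorseq. now apply (sigB_Phi q d). Qed.

Lemma sigB_cm_seq_shift u uh w k :
  sigB d (cm_seq (xorseq u w)) (cm_seq (xorseq uh w)) k = sigB d (cm_seq u) (cm_seq uh) k.
Proof. now rewrite !sigB_cm_seq, xorseq_cancel_r. Qed.

Lemma sumZ_sigB_code_nat x xh K : CMcode q d g1 g2 x -> CMcode q d g1 g2 xh ->
  exists n, sumZ K (sigB d x xh) = INR n.
Proof.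
  intros Cx Cxh.
  destruct (CMcode_cm_seq x Cx) as [u [_ ->]], (CMcode_cm_seq xh Cxh) as [uh [_ ->]].
  set (h k := hamming (conv g1 (xorseq u uh) k) (conv g2 (xorseq u uh) k)).
  destruct (sumZ_INR K (fun k => h k ^ 2)%nat) as [n En].
  exists n. rewrite <- En. apply sumZ_ext_window. intros k _.
  now rewrite sigB_cm_seq, pow_INR.
Qed.

Lemma code_pair_exists : poly_nonzero g1 -> exists x xh K, code_pair x xh K.
Proof.
  intros Hg1. set (u := fun i => Z.eqb i 0).
  assert (Hu : laurent u) by (exists 0%Z; intros k Hk; apply Z.eqb_neq; lia).
  assert (H0 : laurent (fun _ => false)) by (exists 0%Z; auto).
  exists (cm_seq u), (cm_seq (fun _ => false)), (length g1 + length g2)%nat.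
  split; [|split; [|split]]; try now apply CMcode_of_laurent.
  - destruct (first_true g1 Hg1) as [j [Hj _]]. intros E.
    assert (Hs : sigB d (cm_seq u) (cm_seq (fun _ => false)) (Z.of_nat j) = 0)
      by (apply sigB_eq0; [exact Hd | now rewrite E]).
    assert (Hu1 : conv g1 (xorseq u (fun _ => false)) (Z.of_nat j) = true).
    { rewrite conv_xorseq, conv_zero, Bool.xorb_false_r. unfold u.
      rewrite conv_impulse, Z.sub_0_r. unfold coef.
      destruct (Z.ltb_spec (Z.of_nat j) 0); [lia|]. now rewrite Nat2Z.id. }
    rewrite sigB_cm_seq, Hu1 in Hs.
    revert Hs. apply pow_nonzero, not_0_INR. discriminate.
  - intros k Hk. unfold cm_seq, u. rewrite !conv_impulse, !conv_zero, !coef_out by lia.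
    reflexivity.
Qed.

Lemma code_pair_without_s1s4 x xh K :
  poly_nonzero g1 -> poly_nonzero g2 -> code_pair x xh K ->
  exists x' xh', code_pair x' xh' K /\
    (forall k, sigB d x' xh' k = sigB d x xh k) /\
    (forall k, (Z.abs k <= Z.of_nat K)%Z -> is_s1s4 d (x' k) (xh' k) = false).
Proof.
  intros Hg1 Hg2 [Cx [Cxh [Hne Hwin]]].
  destruct (CMcode_cm_seq x Cx) as [u [Hu ->]], (CMcode_cm_seq xh Cxh) as [uh [Huh ->]].
  destruct (Phi_avoid_s1s4 q d Hq Hd) as [s [v Hsv]].
  set (g := if s then g1 else g2).
  destruct (conv_control g (fun k => xorb (conv g u k) v) (- Z.of_nat K) (2 * K + 1))
    as [w [Hw Hc]]; [now unfold g; destruct s|].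
  pose proof (sigB_cm_seq_shift u uh w) as Hsig.
  assert (Heq : forall k, cm_seq (xorseq u w) k = cm_seq (xorseq uh w) k <->
                          cm_seq u k = cm_seq uh k).
  { intros k. rewrite <- (sigB_eq0 d (cm_seq (xorseq u w)) _ Hd k),
      <- (sigB_eq0 d (cm_seq u) _ Hd k), Hsig. reflexivity. }
  exists (cm_seq (xorseq u w)), (cm_seq (xorseq uh w)).
  split; [|split; [exact Hsig|]].
  - split; [|split; [|split]].
    + apply CMcode_of_laurent, laurent_xorseq; assumption.
    + apply CMcode_of_laurent, laurent_xorseq; assumption.
    + intros E. apply Hne, functional_extensionality. intros k. apply Heq. now rewrite E.
    + intros k Hk. apply Heq, Hwin, Hk.
  - intros k Hk. apply Hsv.
    assert (Hv : conv g (xorseq u w) k = v)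
      by (rewrite conv_xorseq, Hc by lia; now destruct (conv g u k), v).
    unfold g in Hv. now destruct s.
Qed.

Lemma code_min_sqrt : poly_nonzero g1 -> poly_nonzero g2 ->
  exists m, 0 < m /\ IsMin (aX d) (CMcode q d g1 g2) m /\ IsMin (aB d) (CMcode q d g1 g2) m.
Proof.
  intros Hg1 Hg2.
  set (P n := exists x xh K, code_pair x xh K /\ sumZ K (sigB d x xh) = INR n).
  assert (HP : exists n, P n).
  { destruct (code_pair_exists Hg1) as [x [xh [K Hpair]]].
    pose proof Hpair as [Cx [Cxh _]].
    destruct (sumZ_sigB_code_nat x xh K Cx Cxh) as [n En].
    now exists n, x, xh, K. }
  destruct (dec_inh_nat_subset_has_unique_least_element P (fun n => classic (P n)) HP)
    as [m [[[x [xh [K [Hpair Em]]]] Hleast] _]].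
  destruct (code_pair_without_s1s4 x xh K Hg1 Hg2 Hpair) as [x' [xh' [Hpair' [Hsig Hno]]]].
  assert (Em' : sumZ K (sigB d x' xh') = INR m) by (rewrite <- Em; now apply sumZ_ext_window).
  destruct Hpair' as [Cx' [Cxh' [Hne' Hwin']]].
  destruct (aX_aB_no_s1s4 d x' xh' K Hd Hne' Hwin' Hno) as [EX EB].
  rewrite Em' in EX, EB.
  assert (Hlower : forall y yh L, code_pair y yh L ->
            sqrt (INR m) <= aX d y yh L /\ sqrt (INR m) <= aB d y yh L).
  { intros y yh L Hp. pose proof Hp as [Cy [Cyh [Hne Hwin]]].
    destruct (sumZ_sigB_code_nat y yh L Cy Cyh) as [n En].
    assert (Hmn : sqrt (INR m) <= sqrt (sumZ L (sigB d y yh))).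
    { rewrite En. apply sqrt_le_1_alt, le_INR, Hleast. now exists y, yh, L. }
    pose proof (aX_ge d y yh L Hd Hne Hwin). pose proof (aB_ge d y yh L Hd Hne Hwin). lra. }
  exists (sqrt (INR m)). split; [|split; split].
  - apply sqrt_lt_R0. rewrite <- Em'. now apply sumZ_sigB_pos.
  - exists x', xh', K. auto.
  - intros y yh L Cy Cyh Hne Hwin. now apply Hlower.
  - exists x', xh', K. auto.
  - intros y yh L Cy Cyh Hne Hwin. now apply Hlower.
Qed.

End Code.

Lemma Loss_diag t : 0 < t -> Loss t t = 0.
Proof. intros Ht. unfold Loss, log10. rewrite Rdiv_diag by lra. rewrite ln_1. unfold Rdiv. ring. Qed.

Theorem theorem4 (d : R) (q : list nat) (g1 g2 : list bool) :
  0 < d ->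
  In q GrayLabelings ->
  poly_nonzero g1 -> poly_nonzero g2 ->
  exists mX mB : R,
    IsMin (aX d) (CMcode q d g1 g2) mX /\
    IsMin (aB d) (CMcode q d g1 g2) mB /\
    Loss mX mB = 0.
Proof.
  intros Hd Hq Hg1 Hg2.
  destruct (code_min_sqrt q d g1 g2 Hq ltac:(lra) Hg1 Hg2) as [m [Hm [HX HB]]].
  exists m, m. auto using Loss_diag.
Qed.
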